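(* Let $\mathbb{F}$ be a field with $\mathrm{Char}(\mathbb{F})=3$. Every $2$-dimensional diassociative algebra $(V,\dashv,\vdash)$ over $\mathbb{F}$ whose product $\dashv$ is not identically zero is isomorphic to one of the following dialgebras $\{A,B\}$ (for some value of the indicated parameter), and dialgebras from different items are pairwise non-isomorphic: <ol> <li>$D_{13,3}^1(\delta_1)$: $A=\begin{pmatrix}0&0&0&0\\1&0&0&0\end{pmatrix}$, $B=\begin{pmatrix}0&0&0&0\\ \delta_1&0&0&0\end{pmatrix}$, $\delta_1\in\mathbb{F}$;</li> <li>$D_{3,3}^2$: $A=B=\begin{pmatrix}1&0&0&0\\0&0&0&0\end{pmatrix}$;</li> <li>$D_{3,3}^3$: $A=\begin{pmatrix}1&0&0&0\\0&0&0&0\end{pmatrix}$, $B=\begin{pmatrix}1&0&0&0\\0&1&0&0\end{pmatrix}$;</li> <li>$D_{3,3}^4$: $A=B=\begin{pmatrix}1&0&0&0\\0&1&0&0\end{pmatrix}$;</li> <li>$D_{3,3}^5(\delta_1)$: $A=\begin{pmatrix}2&0&0&0\\0&0&2&0\end{pmatrix}$, $B=\begin{pmatrix}2&0&0&0\\ \delta_1&0&0&0\end{pmatrix}$, $\delta_1\in\mathbb{F}$;</li> <li>$D_{3,3}^6$: $A=\begin{pmatrix}2&0&0&0\\0&0&2&0\end{pmatrix}$, $B=\begin{pmatrix}2&0&0&0\\0&2&0&0\end{pmatrix}$;</li> <li>$D_{3,3}^7$: $A=B=\begin{pmatrix}2&0&0&0\\0&0&2&0\end{pmatrix}$;</li>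 <li>$D_{3,3}^8(\alpha_4)$: $A=B=\begin{pmatrix}2&0&0&\alpha_4\\0&2&2&0\end{pmatrix}$, $\alpha_4\in\mathbb{F}$.</li> </ol>
   Context: Let $\mathbb{F}$ be a field. A diassociative algebra (associative dialgebra) is a vector space $V$ over $\mathbb{F}$ with two bilinear products $\dashv,\vdash$ satisfying, for all $x,y,z\in V$: $(x\dashv y)\dashv z=x\dashv(y\dashv z)$; $x\dashv(y\dashv z)=x\dashv(y\vdash z)$; $(x\vdash y)\dashv z=x\vdash(y\dashv z)$; $(x\dashv y)\vdash z=(x\vdash y)\vdash z$; $(x\vdash y)\vdash z=x\vdash(y\vdash z)$. Two such dialgebras are isomorphic if there is an invertible linear map $f$ with $f(x\dashv y)=f(x)\dashv' f(y)$ and $f(x\vdash y)=f(x)\vdash' f(y)$ for all $x,y$. For $\dim V=2$ with fixed basis $(e_1,e_2)$, a $2\times4$ matrix $\begin{pmatrix}\alpha_1&\alpha_2&\alpha_3&\alpha_4\\ \beta_1&\beta_2&\beta_3&\beta_4\end{pmatrix}$ encodes a bilinear product $\ast$ by $e_1\ast e_1=\alpha_1e_1+\beta_1e_2$, $e_1\ast e_2=\alpha_2e_1+\beta_2e_2$, $e_2\ast e_1=\alpha_3e_1+\beta_3e_2$, $e_2\ast e_2=\alpha_4e_1+\beta_4e_2$. A pair $\{A,B\}$ denotes the dialgebra whose product $\dashv$ is encoded by $A$ and whose product $\vdash$ is encoded by $B$. *)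

From HB Require Import structures.
From mathcomp Require Import all_boot all_order all_algebra.
Set Implicit Arguments. Unset Strict Implicit. Unset Printing Implicit Defensive.
Import Order.TTheory GRing.Theory.
Local Open Scope ring_scope.

Section Dialg.
Variable F : fieldType.

Definition is_bilinear (V : lmodType F) (p : V -> V -> V) : Prop :=
  forall (a : F) (x y z : V),
    p (a *: x + y) z = a *: p x z + p y z /\
    p z (a *: x + y) = a *: p z x + p z y.

(** The five diassociativity axioms (dl = "-|", dr = "|-"). *)
Definition diassociative (V : lmodType F) (dl dr : V -> V -> V) : Prop :=
  forall x y z : V,
    [/\ dl (dl x y) z = dl x (dl y z),
        dl x (dl y z) = dl x (dr y z),
        dl (dr x y) z = dr x (dl y z),
        dr (dl x y) z = dr (dr x y) z
      & dr (dr x y) z = dr x (dr y z)].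

Definition dialg_iso (V W : lmodType F) (dl dr : V -> V -> V)
    (dl' dr' : W -> W -> W) : Prop :=
  exists f : V -> W,
    [/\ forall (a : F) (x y : V), f (a *: x + y) = a *: f x + f y,
        bijective f,
        forall x y, f (dl x y) = dl' (f x) (f y)
      & forall x y, f (dr x y) = dr' (f x) (f y)].

Definition i0 : 'I_2 := @Ordinal 2 0 isT.
Definition i1 : 'I_2 := @Ordinal 2 1 isT.
Definition j0 : 'I_4 := @Ordinal 4 0 isT.
Definition j1 : 'I_4 := @Ordinal 4 1 isT.
Definition j2 : 'I_4 := @Ordinal 4 2 isT.
Definition j3 : 'I_4 := @Ordinal 4 3 isT.

Definition mx24 (a1 a2 a3 a4 b1 b2 b3 b4 : F) : 'M[F]_(2,4) :=
  \matrix_(i < 2, j < 4)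
    nth 0 (if i == i0 then [:: a1; a2; a3; a4] else [:: b1; b2; b3; b4]) j.

(** The bilinear product on F^2 (row vectors, basis e1 = coordinate 0,
    e2 = coordinate 1) encoded by M:
    e1*e1 = M00 e1 + M10 e2, e1*e2 = M01 e1 + M11 e2,
    e2*e1 = M02 e1 + M12 e2, e2*e2 = M03 e1 + M13 e2. *)
Definition mprod (M : 'M[F]_(2,4)) (x y : 'rV[F]_2) : 'rV[F]_2 :=
  \row_(k < 2) (x 0 i0 * y 0 i0 * M k j0 + x 0 i0 * y 0 i1 * M k j1
              + x 0 i1 * y 0 i0 * M k j2 + x 0 i1 * y 0 i1 * M k j3).

Inductive item := D13_3_1 | D3_3_2 | D3_3_3 | D3_3_4 | D3_3_5 | D3_3_6
                | D3_3_7 | D3_3_8.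

(** The pair {A, B} of item [i] with parameter [p]
    (p = delta_1 for items 1 and 5, p = alpha_4 for item 8, ignored otherwise). *)
Definition item_pair (i : item) (p : F) : 'M[F]_(2,4) * 'M[F]_(2,4) :=
  match i with
  | D13_3_1 => (mx24 0 0 0 0 1 0 0 0, mx24 0 0 0 0 p 0 0 0)
  | D3_3_2 => (mx24 1 0 0 0 0 0 0 0, mx24 1 0 0 0 0 0 0 0)
  | D3_3_3 => (mx24 1 0 0 0 0 0 0 0, mx24 1 0 0 0 0 1 0 0)
  | D3_3_4 => (mx24 1 0 0 0 0 1 0 0, mx24 1 0 0 0 0 1 0 0)
  | D3_3_5 => (mx24 2 0 0 0 0 0 2 0, mx24 2 0 0 0 p 0 0 0)
  | D3_3_6 => (mx24 2 0 0 0 0 0 2 0, mx24 2 0 0 0 0 2 0 0)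
  | D3_3_7 => (mx24 2 0 0 0 0 0 2 0, mx24 2 0 0 0 0 0 2 0)
  | D3_3_8 => (mx24 2 0 0 p 0 2 2 0, mx24 2 0 0 p 0 2 2 0)
  end.

Definition item_dl (i : item) (p : F) := mprod (item_pair i p).1.
Definition item_dr (i : item) (p : F) := mprod (item_pair i p).2.

End Dialg.

From HB Require Import structures.
From mathcomp Require Import all_boot all_order all_algebra.
From mathcomp Require Import ring.
Import GRing.Theory.
Set Implicit Arguments. Unset Strict Implicit. Unset Printing Implicit Defensive.
Local Open Scope ring_scope.

(* If some [x] among [e1, e2,
   e1 + e2, e1 - e2] is independent of [x -| x], then in the basis
   [(x, x -| x)] the whole product is determined by [x -| x -| x = a x + b (x -| x)],
   and a further change of basis makes it nilpotent, [F] times a zero algebra, or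
   unital.  Otherwise [x -| x] is parallel to [x] for these four vectors, which
   with associativity forces [x -| y = phi(x) y] or [x -| y = phi(y) x] for a
   linear form [phi], i.e. a left or a right unit after a change of basis.  For
   each of these five normal forms of [-|], the other four axioms evaluated on
   basis vectors determine [|-] up to the parameter of the item.  Items are told
   apart by isomorphism invariants: [-| = |-], vanishing of triple [-|]-products,
   commutativity of [-|] and of [|-], and a left unit for [-|]. *)

Section Bilinear.
Variables (F : fieldType) (V : lmodType F) (p : V -> V -> V).
Hypothesis p_bil : is_bilinear p.

Lemma bilinearDl x y z : p (x + y) z = p x z + p y z.
Proof. by have [h _] := p_bil 1 x y z; rewrite !scale1r in h. Qed.

Lemma bilinearDr x y z : p z (x + y) = p z x + p z y.
Proof. by have [_ h] := p_bil 1 x y z; rewrite !scale1r in h. Qed.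

Lemma bilinear0l z : p 0 z = 0.
Proof. by apply: (addrI (p 0 z)); rewrite -bilinearDl !addr0. Qed.

Lemma bilinear0r z : p z 0 = 0.
Proof. by apply: (addrI (p z 0)); rewrite -bilinearDr !addr0. Qed.

Lemma bilinearZl a x z : p (a *: x) z = a *: p x z.
Proof. by have [h _] := p_bil a x 0 z; rewrite !addr0 bilinear0l addr0 in h. Qed.

Lemma bilinearZr a x z : p z (a *: x) = a *: p z x.
Proof. by have [_ h] := p_bil a x 0 z; rewrite !addr0 bilinear0r addr0 in h. Qed.

End Bilinear.

Section DialgIso.
Variable F : fieldType.
Implicit Types U V W : lmodType F.

Lemma linear_map0 V W (f : V -> W) :
  (forall a x y, f (a *: x + y) = a *: f x + f y) -> f 0 = 0.
Proof.
move=> f_lin; have := f_lin 1 0 0; rewrite !scale1r addr0 => f00.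
by apply: (addrI (f 0)); rewrite addr0 -f00.
Qed.

Lemma dialg_iso_refl V (dl dr : V -> V -> V) : dialg_iso dl dr dl dr.
Proof. by exists id; split => //; exists id. Qed.

Lemma dialg_iso_sym V W (dl dr : V -> V -> V) (dl' dr' : W -> W -> W) :
  dialg_iso dl dr dl' dr' -> dialg_iso dl' dr' dl dr.
Proof.
case=> f [f_lin [g fK gK] f_dl f_dr]; have f_inj := can_inj fK.
exists g; split.
- by move=> a x y; apply: f_inj; rewrite f_lin !gK.
- exact: (Bijective gK fK).
- by move=> x y; apply: f_inj; rewrite f_dl !gK.
- by move=> x y; apply: f_inj; rewrite f_dr !gK.
Qed.

Lemma dialg_iso_trans U V W (dl dr : U -> U -> U) (dl' dr' : V -> V -> V)
    (dl'' dr'' : W -> W -> W) :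
  dialg_iso dl dr dl' dr' -> dialg_iso dl' dr' dl'' dr'' -> dialg_iso dl dr dl'' dr''.
Proof.
case=> f [f_lin f_bij f_dl f_dr] [g [g_lin g_bij g_dl g_dr]].
exists (g \o f); split => [a x y||x y|x y] /=.
- by rewrite f_lin g_lin.
- exact: bij_comp.
- by rewrite f_dl g_dl.
- by rewrite f_dr g_dr.
Qed.

Lemma dialg_iso_diassociative V W (dl dr : V -> V -> V) (dl' dr' : W -> W -> W) :
  dialg_iso dl dr dl' dr' -> diassociative dl' dr' -> diassociative dl dr.
Proof.
case=> f [_ [g fK _] f_dl f_dr] H x y z; have f_inj := can_inj fK.
have [h1 h2 h3 h4 h5] := H (f x) (f y) (f z).
by split; apply: f_inj; rewrite !(f_dl, f_dr).
Qed.

Lemma dialg_iso_nonzero V W (dl dr : V -> V -> V) (dl' dr' : W -> W -> W) :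
  dialg_iso dl dr dl' dr' -> (exists x y, dl' x y != 0) -> exists x y, dl x y != 0.
Proof.
case=> f [f_lin [g _ gK] f_dl _] [x [y nz]]; exists (g x), (g y).
apply: contraNneq nz => dl0.
by rewrite -(gK x) -(gK y) -f_dl dl0 (linear_map0 f_lin).
Qed.

Definition prod3_null V (p : V -> V -> V) := forall x y z, p (p x y) z = 0.

Lemma dialg_iso_invariants V W (dl dr : V -> V -> V) (dl' dr' : W -> W -> W) :
  dialg_iso dl dr dl' dr' ->
  [/\ dl =2 dr <-> dl' =2 dr', prod3_null dl <-> prod3_null dl',
      commutative dl <-> commutative dl', commutative dr <-> commutative dr'
    & (exists e, left_id e dl) <-> (exists e, left_id e dl')].
Proof.
have transfer V1 W1 (d1 d2 : V1 -> V1 -> V1) (d1' d2' : W1 -> W1 -> W1) :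
    dialg_iso d1 d2 d1' d2' ->
    [/\ d1 =2 d2 -> d1' =2 d2', prod3_null d1 -> prod3_null d1',
        commutative d1 -> commutative d1', commutative d2 -> commutative d2'
      & (exists e, left_id e d1) -> exists e, left_id e d1'].
  case=> f [f_lin [g _ gK] f_d1 f_d2]; split.
  - by move=> d12 x y; rewrite -(gK x) -(gK y) -f_d1 -f_d2 d12.
  - by move=> d10 x y z; rewrite -(gK x) -(gK y) -(gK z) -!f_d1 d10 (linear_map0 f_lin).
  - by move=> d1C x y; rewrite -(gK x) -(gK y) -!f_d1 d1C.
  - by move=> d2C x y; rewrite -(gK x) -(gK y) -!f_d2 d2C.
  - by case=> e eK; exists (f e) => x; rewrite -(gK x) -f_d1 eK.
move=> iso; have [t1 t2 t3 t4 t5] := transfer _ _ _ _ _ _ iso.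
by have [s1 s2 s3 s4 s5] := transfer _ _ _ _ _ _ (dialg_iso_sym iso).
Qed.

End DialgIso.

Section Plane.
Variable F : fieldType.

Lemma ord2P (k : 'I_2) : k = i0 \/ k = i1.
Proof. by case: k => [[|[|k]] hk]; [left|right|]; try apply/val_inj. Qed.

Definition vec2 (c d : F) : 'rV[F]_2 := \row_(k < 2) (if k == i0 then c else d).
Definition e1 := vec2 1 0.
Definition e2 := vec2 0 1.

Lemma row2_eq (x y : 'rV[F]_2) : x 0 i0 = y 0 i0 -> x 0 i1 = y 0 i1 -> x = y.
Proof. by move=> eq0 eq1; apply/rowP => k; case: (ord2P k) => ->. Qed.

Lemma mx24_eta (S : 'M[F]_(2,4)) :
  S = mx24 (S i0 j0) (S i0 j1) (S i0 j2) (S i0 j3) (S i1 j0) (S i1 j1) (S i1 j2) (S i1 j3).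
Proof.
apply/matrixP => i j; rewrite !mxE; case: (ord2P i) => ->;
by case: j => [[|[|[|[|j]]]] hj] //=; congr (S _ _); apply/val_inj.
Qed.

End Plane.

Arguments e1 {F}.
Arguments e2 {F}.

Ltac field_hyps := field; repeat (apply/andP; split); done.

Ltac row2_field := apply: row2_eq; rewrite !mxE /=; field_hyps.

Lemma mprod_bilinear (F : fieldType) (M : 'M[F]_(2,4)) : is_bilinear (mprod M).
Proof. by move=> a x y z; split; row2_field. Qed.

Section Coordinates.
Variables (F : fieldType) (V : lmodType F) (u w : V) (c1 c2 : V -> F).
Hypothesis uw_span : forall v, v = c1 v *: u + c2 v *: w.
Hypothesis uw_free : forall a b, a *: u + b *: w = 0 -> a = 0 /\ b = 0.

Definition of_coords (x : 'rV[F]_2) : V := x 0 i0 *: u + x 0 i1 *: w.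
Definition to_coords (v : V) : 'rV[F]_2 := vec2 (c1 v) (c2 v).

Lemma of_coords_inj : injective of_coords.
Proof.
move=> x y /eqP; rewrite -subr_eq0 /of_coords opprD addrACA -!scalerBl.
by move=> /eqP /uw_free [/subr0_eq ? /subr0_eq ?]; apply: row2_eq.
Qed.

Lemma to_coordsK : cancel to_coords of_coords.
Proof. by move=> v; rewrite /of_coords !mxE /= -uw_span. Qed.

Lemma of_coordsK : cancel of_coords to_coords.
Proof. by move=> x; apply: of_coords_inj; rewrite to_coordsK. Qed.

Lemma of_coords_linear a x y : of_coords (a *: x + y) = a *: of_coords x + of_coords y.
Proof. by rewrite /of_coords !mxE !scalerDl -!scalerA !scalerDr addrACA. Qed.

Definition is_struct_mx (p : V -> V -> V) (T : 'M[F]_(2,4)) :=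
  [/\ p u u = T i0 j0 *: u + T i1 j0 *: w, p u w = T i0 j1 *: u + T i1 j1 *: w,
      p w u = T i0 j2 *: u + T i1 j2 *: w & p w w = T i0 j3 *: u + T i1 j3 *: w].

Definition struct_mx (p : V -> V -> V) : 'M[F]_(2,4) :=
  mx24 (c1 (p u u)) (c1 (p u w)) (c1 (p w u)) (c1 (p w w))
       (c2 (p u u)) (c2 (p u w)) (c2 (p w u)) (c2 (p w w)).

Lemma struct_mxP p : is_struct_mx p (struct_mx p).
Proof. by rewrite /is_struct_mx /struct_mx !mxE /=; split; apply: uw_span. Qed.

Lemma of_coords_mprod p T : is_bilinear p -> is_struct_mx p T ->
  {morph of_coords : x y / mprod T x y >-> p x y}.
Proof.
move=> p_bil [uu uw wu ww] x y.
have combE k l a b c d : k *: (a *: u + b *: w) + l *: (c *: u + d *: w)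
    = (k * a + l * c) *: u + (k * b + l * d) *: w.
  by rewrite !scalerDr !scalerA !scalerDl addrACA.
rewrite /of_coords (bilinearDl p_bil) !(bilinearZl p_bil) !(bilinearDr p_bil).
rewrite !(bilinearZr p_bil) uu uw wu ww !combE !mxE.
by congr (_ *: _ + _ *: _); ring.
Qed.

Lemma struct_mx_iso (dl dr : V -> V -> V) T S :
  is_bilinear dl -> is_bilinear dr -> is_struct_mx dl T -> is_struct_mx dr S ->
  dialg_iso (mprod T) (mprod S) dl dr.
Proof.
move=> dl_bil dr_bil dlT drS; exists of_coords; split.
- exact: of_coords_linear.
- exact: (Bijective of_coordsK to_coordsK).
- exact: of_coords_mprod.
- exact: of_coords_mprod.
Qed.

End Coordinates.

Section PlaneBasis.
Variables (F : fieldType) (u w : 'rV[F]_2).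

Definition det2 := u 0 i0 * w 0 i1 - u 0 i1 * w 0 i0.
Definition coord1 (v : 'rV[F]_2) := (v 0 i0 * w 0 i1 - v 0 i1 * w 0 i0) / det2.
Definition coord2 (v : 'rV[F]_2) := (u 0 i0 * v 0 i1 - u 0 i1 * v 0 i0) / det2.

Hypothesis det2_neq0 : det2 != 0.

Lemma det2_span v : v = coord1 v *: u + coord2 v *: w.
Proof.
move: det2_neq0; rewrite /det2 => d_neq0.
by rewrite /coord1 /coord2 /det2; row2_field.
Qed.

Lemma det2_free a b : a *: u + b *: w = 0 -> a = 0 /\ b = 0.
Proof.
move: det2_neq0; rewrite /det2 => d_neq0 abz; split.
- have -> : a = coord1 (a *: u + b *: w) by rewrite /coord1 /det2 !mxE; field_hyps.
  by rewrite abz /coord1 !mxE; ring.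
- have -> : b = coord2 (a *: u + b *: w) by rewrite /coord2 /det2 !mxE; field_hyps.
  by rewrite abz /coord2 !mxE; ring.
Qed.

Lemma change_basis (A B T : 'M[F]_(2,4)) : is_struct_mx u w (mprod A) T ->
  dialg_iso (mprod T) (mprod (struct_mx u w coord1 coord2 (mprod B))) (mprod A) (mprod B).
Proof.
move=> AT; apply: (struct_mx_iso det2_span det2_free) => //; try exact: mprod_bilinear.
exact: (struct_mxP det2_span).
Qed.

End PlaneBasis.

Lemma mulf_eq0_or (R : idomainType) (x y : R) : x * y = 0 -> x = 0 \/ y = 0.
Proof. by move/eqP; rewrite mulf_eq0 => /orP [] /eqP; [left|right]. Qed.

Lemma mul_self_eq0 (R : idomainType) (x : R) : x * x = 0 -> x = 0.
Proof. by case/mulf_eq0_or. Qed.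

Lemma four_neq0 (R : idomainType) : (2 : R) != 0 -> (4 : R) != 0.
Proof. by move=> two_neq0; rewrite (_ : 4 = 2 * 2) ?mulf_neq0 //; ring. Qed.

Lemma eq_of_diff_scaled (F : fieldType) (x e L R k : F) :
  L = R -> L - R = k * (x - e) -> k != 0 -> x = e.
Proof.
move=> -> LR k_neq0; apply: subr0_eq.
by apply: (mulfI k_neq0); rewrite mulr0 -LR subrr.
Qed.

Lemma false_of_diff_const (F : fieldType) (L R k : F) : L = R -> L - R = k -> k != 0 -> False.
Proof. by move=> -> <-; rewrite subrr eqxx. Qed.

(* [from_coord E c] reads off coordinate [c] of a row-vector identity [E] and
   proves a goal [x = e] when the two sides of that coordinate differ, as a ring
   identity, by [k * (x - e)] with [k] among 1, -1, 2, -2; [refute_at E c] closes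
   the goal when they differ by one of 1, -1, 2, -2, 4, -4.  Facts [2 != 0] and
   [4 != 0] are taken from the context. *)
Ltac nonzero_coeff := rewrite ?oppr_eq0 ?oner_eq0 //.

Ltac solve_linear h :=
  first [ apply: (eq_of_diff_scaled (k := 1) h); [by ring | nonzero_coeff]
        | apply: (eq_of_diff_scaled (k := -1) h); [by ring | nonzero_coeff]
        | apply: (eq_of_diff_scaled (k := 2) h); [by ring | nonzero_coeff]
        | apply: (eq_of_diff_scaled (k := -2) h); [by ring | nonzero_coeff] ].

Ltac refute h :=
  first [ apply: (false_of_diff_const (k := 1) h); [by ring | nonzero_coeff]
        | apply: (false_of_diff_const (k := -1) h); [by ring | nonzero_coeff]
        | apply: (false_of_diff_const (k := 2) h); [by ring | nonzero_coeff]
        | apply: (false_of_diff_const (k := -2) h); [by ring | nonzero_coeff]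
        | apply: (false_of_diff_const (k := 4) h); [by ring | nonzero_coeff]
        | apply: (false_of_diff_const (k := -4) h); [by ring | nonzero_coeff] ].

Ltac coord_eq h E c := have h := congr1 (fun v : 'rV_2 => v 0 c) E; rewrite /= !mxE /= in h.

Ltac from_coord E c := let h := fresh "h" in coord_eq h E c; solve_linear h.

Ltac refute_at E c := let h := fresh "h" in coord_eq h E c; refute h.

Section Diassociative.
Variables (F : fieldType) (V : lmodType F) (dl dr : V -> V -> V).
Hypothesis dlr : diassociative dl dr.

Lemma diassoc_dlA x y z : dl (dl x y) z = dl x (dl y z). Proof. by case: (dlr x y z). Qed.
Lemma diassoc_dl_dr x y z : dl x (dl y z) = dl x (dr y z). Proof. by case: (dlr x y z). Qed.
Lemma diassoc_mixA x y z : dl (dr x y) z = dr x (dl y z). Proof. by case: (dlr x y z). Qed.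
Lemma diassoc_dr_dl x y z : dr (dl x y) z = dr (dr x y) z. Proof. by case: (dlr x y z). Qed.
Lemma diassoc_drA x y z : dr (dr x y) z = dr x (dr y z). Proof. by case: (dlr x y z). Qed.

End Diassociative.

Section RightProducts.
Variable F : fieldType.
Hypothesis two_neq0 : (2 : F) != 0.

Definition items_cover (T : 'M[F]_(2,4)) := forall S : 'M[F]_(2,4),
  diassociative (mprod T) (mprod S) ->
  exists i p, dialg_iso (item_dl i p) (item_dr i p) (mprod T) (mprod S).

Lemma items_cover_entries (T : 'M[F]_(2,4)) :
  (forall c1 c2 c3 c4 d1 d2 d3 d4 : F,
     diassociative (mprod T) (mprod (mx24 c1 c2 c3 c4 d1 d2 d3 d4)) ->
     exists i p, dialg_iso (item_dl i p) (item_dr i p)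
                   (mprod T) (mprod (mx24 c1 c2 c3 c4 d1 d2 d3 d4))) ->
  items_cover T.
Proof. by move=> coverT S; rewrite (mx24_eta S); apply: coverT. Qed.

Lemma items_cover_nil : items_cover (mx24 0 0 0 0 1 0 0 0).
Proof.
apply: items_cover_entries => c1 c2 c3 c4 d1 d2 d3 d4 dlr.
have ? : c1 = 0 by from_coord (diassoc_dl_dr dlr e1 e1 e1) i1.
have ? : c2 = 0 by from_coord (diassoc_mixA dlr e1 e1 e1) i0.
have ? : c3 = 0 by from_coord (diassoc_dl_dr dlr e1 e2 e1) i1.
have ? : c4 = 0 by from_coord (diassoc_dl_dr dlr e1 e2 e2) i1.
subst; have ? : d2 = 0 by from_coord (diassoc_mixA dlr e1 e1 e1) i1.
have ? : d4 = 0 by from_coord (diassoc_mixA dlr e2 e1 e1) i1.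
subst; have /mul_self_eq0 ? : d3 * d3 = 0 by from_coord (diassoc_dr_dl dlr e2 e1 e1) i1.
by subst; exists D13_3_1, d1; apply: dialg_iso_refl.
Qed.

Lemma items_cover_idem : items_cover (mx24 1 0 0 0 0 0 0 0).
Proof.
apply: items_cover_entries => c1 c2 c3 c4 d1 d2 d3 d4 dlr.
have ? : c1 = 1 by from_coord (diassoc_dl_dr dlr e1 e1 e1) i0.
have ? : c2 = 0 by from_coord (diassoc_dl_dr dlr e1 e1 e2) i0.
have ? : c3 = 0 by from_coord (diassoc_dl_dr dlr e1 e2 e1) i0.
have ? : c4 = 0 by from_coord (diassoc_dl_dr dlr e1 e2 e2) i0.
subst; have ? : d1 = 0 by from_coord (diassoc_mixA dlr e1 e1 e1) i1.
have ? : d3 = 0 by from_coord (diassoc_mixA dlr e2 e1 e1) i1.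
subst; have /mul_self_eq0 ? : d4 * d4 = 0 by from_coord (diassoc_dr_dl dlr e2 e2 e2) i1.
subst; have : d2 * (1 - d2) = 0 by from_coord (diassoc_drA dlr e1 e1 e2) i1.
case/mulf_eq0_or => [|/subr0_eq] ?; subst.
- by exists D3_3_2, 0; apply: dialg_iso_refl.
- by exists D3_3_3, 0; apply: dialg_iso_refl.
Qed.

Lemma items_cover_left_unit : items_cover (mx24 1 0 0 0 0 1 0 0).
Proof.
apply: items_cover_entries => c1 c2 c3 c4 d1 d2 d3 d4 dlr.
have ? : c1 = 1 by from_coord (diassoc_dl_dr dlr e1 e1 e1) i0.
have ? : d1 = 0 by from_coord (diassoc_dl_dr dlr e1 e1 e1) i1.
have ? : c2 = 0 by from_coord (diassoc_dl_dr dlr e1 e1 e2) i0.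
have ? : d2 = 1 by from_coord (diassoc_dl_dr dlr e1 e1 e2) i1.
have ? : c3 = 0 by from_coord (diassoc_dl_dr dlr e1 e2 e1) i0.
have ? : d3 = 0 by from_coord (diassoc_dl_dr dlr e1 e2 e1) i1.
have ? : c4 = 0 by from_coord (diassoc_dl_dr dlr e1 e2 e2) i0.
have ? : d4 = 0 by from_coord (diassoc_dl_dr dlr e1 e2 e2) i1.
by subst; exists D3_3_4, 0; apply: dialg_iso_refl.
Qed.

Lemma items_cover_unital (a : F) : items_cover (mx24 2 0 0 a 0 2 2 0).
Proof.
apply: items_cover_entries => c1 c2 c3 c4 d1 d2 d3 d4 dlr.
have ? : c1 = 2 by from_coord (diassoc_dl_dr dlr e1 e1 e1) i0.
have ? : d1 = 0 by from_coord (diassoc_dl_dr dlr e1 e1 e1) i1.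
have ? : c2 = 0 by from_coord (diassoc_dl_dr dlr e1 e1 e2) i0.
have ? : d2 = 2 by from_coord (diassoc_dl_dr dlr e1 e1 e2) i1.
have ? : c3 = 0 by from_coord (diassoc_dl_dr dlr e1 e2 e1) i0.
have ? : d3 = 2 by from_coord (diassoc_dl_dr dlr e1 e2 e1) i1.
have ? : c4 = a by from_coord (diassoc_dl_dr dlr e1 e2 e2) i0.
have ? : d4 = 0 by from_coord (diassoc_dl_dr dlr e1 e2 e2) i1.
by subst; exists D3_3_8, a; apply: dialg_iso_refl.
Qed.

Lemma items_cover_right_unit : items_cover (mx24 2 0 0 0 0 0 2 0).
Proof.
apply: items_cover_entries => c1 c2 c3 c4 d1 d2 d3 d4 dlr.
have ? : c1 = 2 by from_coord (diassoc_dl_dr dlr e1 e1 e1) i0.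
have ? : c2 = 0 by from_coord (diassoc_dl_dr dlr e1 e1 e2) i0.
have ? : c3 = 0 by from_coord (diassoc_dl_dr dlr e1 e2 e1) i0.
have ? : c4 = 0 by from_coord (diassoc_dl_dr dlr e1 e2 e2) i0.
subst; have /mul_self_eq0 ? : d4 * d4 = 0 by from_coord (diassoc_dr_dl dlr e2 e2 e2) i1.
subst; have d3E : d3 * (2 - d3) = 0 by from_coord (diassoc_dr_dl dlr e2 e1 e1) i1.
have d23 : d2 * d3 = 0 by from_coord (diassoc_dr_dl dlr e1 e2 e1) i1.
have d13 : d1 * d3 = 0 by from_coord (diassoc_dr_dl dlr e1 e1 e1) i1.
have d2E : d2 * (2 - d2) = 0 by from_coord (diassoc_drA dlr e1 e1 e2) i1.
case/mulf_eq0_or: d3E => [|/subr0_eq] ?; subst.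
- case/mulf_eq0_or: d2E => [|/subr0_eq] ?; subst.
  + by exists D3_3_5, d1; apply: dialg_iso_refl.
  + have : d1 * 2 = 0 by from_coord (diassoc_drA dlr e1 e1 e1) i1.
    case/mulf_eq0_or => [->|/eqP]; last by rewrite (negPf two_neq0).
    by exists D3_3_6, 0; apply: dialg_iso_refl.
- case/mulf_eq0_or: d23 => [?|/eqP]; last by rewrite (negPf two_neq0).
  case/mulf_eq0_or: d13 => [?|/eqP]; last by rewrite (negPf two_neq0).
  by subst; exists D3_3_7, 0; apply: dialg_iso_refl.
Qed.

End RightProducts.

Section LeftProducts.
Variable F : fieldType.
Hypothesis two_neq0 : (2 : F) != 0.

Lemma items_cover_change_basis (A T : 'M[F]_(2,4)) (u w : 'rV[F]_2) :
  det2 u w != 0 -> is_struct_mx u w (mprod A) T -> items_cover T -> items_cover A.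
Proof.
move=> d_neq0 AT coverT S dlr.
have iso := change_basis d_neq0 S AT.
have [i [p ip]] := coverT _ (dialg_iso_diassociative iso dlr).
by exists i, p; apply: dialg_iso_trans ip iso.
Qed.

(* [x -| y = phi(x) y] with [phi = (b, a)]: a vector [u] with [phi(u) = 1] is a left
   unit and [w] spans [ker phi]. *)
Lemma items_cover_lscale (b a : F) : (b != 0) || (a != 0) ->
  items_cover (mx24 b 0 a 0 0 b 0 a).
Proof.
case/orP => nz.
- apply: (@items_cover_change_basis _ _ (vec2 b^-1 0) (vec2 a (- b)));
    last exact: items_cover_left_unit.
  + by rewrite /det2 !mxE /= mul0r subr0 mulrN mulVf // oppr_eq0 oner_eq0.
  + by split; row2_field.
- apply: (@items_cover_change_basis _ _ (vec2 0 a^-1) (vec2 a (- b)));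
    last exact: items_cover_left_unit.
  + by rewrite /det2 !mxE /= mul0r sub0r mulVf // oppr_eq0 oner_eq0.
  + by split; row2_field.
Qed.

(* [x -| y = phi(y) x] with [phi = (b, a)]: take [phi(u) = 2] and [w] spanning
   [ker phi]. *)
Lemma items_cover_rscale (b a : F) : (b != 0) || (a != 0) ->
  items_cover (mx24 b a 0 0 0 0 b a).
Proof.
case/orP => nz.
- apply: (@items_cover_change_basis _ _ (vec2 (2 / b) 0) (vec2 a (- b)));
    last exact: items_cover_right_unit.
  + have -> : det2 (vec2 (2 / b) 0) (vec2 a (- b)) = - 2 by rewrite /det2 !mxE /=; field_hyps.
    by rewrite oppr_eq0.
  + by split; row2_field.
- apply: (@items_cover_change_basis _ _ (vec2 0 (2 / a)) (vec2 a (- b)));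
    last exact: items_cover_right_unit.
  + have -> : det2 (vec2 0 (2 / a)) (vec2 a (- b)) = - 2 by rewrite /det2 !mxE /=; field_hyps.
    by rewrite oppr_eq0.
  + by split; row2_field.
Qed.

(* The structure constants in a basis [(x, x^2)] with [x^3 = a x + b x^2].  For
   [a != 0], [(x^2 - b x) / a] is a unit [1], and the new basis
   [(2 * 1, x - b/2 * 1)] completes the square. *)
Lemma items_cover_cyclic (a b : F) : items_cover (mx24 0 a a (a * b) 1 b b (a + b ^+ 2)).
Proof.
have [-> {a}|a_neq0] := eqVneq a 0.
  have [-> {b}|b_neq0] := eqVneq b 0.
    by rewrite mul0r add0r expr2 mul0r; exact: items_cover_nil.
  apply: (@items_cover_change_basis _ _ (vec2 0 (b ^- 2)) (vec2 1 (- b^-1)));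
    last exact: items_cover_idem.
  + have -> : det2 (vec2 0 (b ^- 2)) (vec2 1 (- b^-1)) = - b ^- 2.
      by rewrite /det2 !mxE /=; field_hyps.
    by rewrite oppr_eq0 invr_eq0 expf_neq0.
  + by split; row2_field.
have four_nz := four_neq0 two_neq0.
apply: (@items_cover_change_basis _ (mx24 2 0 0 ((a + b ^+ 2 / 4) / 2) 0 2 2 0)
          (vec2 (- 2 * b / a) (2 / a)) (vec2 (1 + b ^+ 2 / (2 * a)) (- b / (2 * a))));
  last exact: items_cover_unital.
+ have -> : det2 (vec2 (- 2 * b / a) (2 / a)) (vec2 (1 + b ^+ 2 / (2 * a)) (- b / (2 * a)))
      = - 2 / a by rewrite /det2 !mxE /=; field_hyps.
  by rewrite mulf_neq0 // ?oppr_eq0 ?invr_eq0.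
+ by split; row2_field.
Qed.

Lemma items_cover_generated (A : 'M[F]_(2,4)) (x : 'rV[F]_2) :
  det2 x (mprod A x x) != 0 -> items_cover A.
Proof.
move=> d_neq0 S dlr.
pose y := mprod A x x; pose z := mprod A x y.
pose a := coord1 x y z; pose b := coord2 x y z.
have zE : z = a *: x + b *: y := det2_span d_neq0 z.
have A_bil := mprod_bilinear A.
have xyT : is_struct_mx x y (mprod A) (mx24 0 a a (a * b) 1 b b (a + b ^+ 2)).
  rewrite /is_struct_mx !mxE /=; split.
  - by rewrite scale0r add0r scale1r.
  - exact: zE.
  - by rewrite /y (diassoc_dlA dlr) -/y -/z.
  - rewrite {1}/y (diassoc_dlA dlr) -/y -/z zE (bilinearDr A_bil) !(bilinearZr A_bil).
    by rewrite -/y -/z zE; row2_field.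
by move: S dlr; apply: (items_cover_change_basis d_neq0 xyT); apply: items_cover_cyclic.
Qed.

Lemma items_cover_sq_parallel (a2 a3 b2 b3 : F) :
  (exists x y, mprod (mx24 (b2 + b3) a2 a3 0 0 b2 b3 (a2 + a3)) x y != 0) ->
  items_cover (mx24 (b2 + b3) a2 a3 0 0 b2 b3 (a2 + a3)).
Proof.
move=> nz S dlr.
(* By associativity either [b2 = a3 = 0] or [a2 = b3 = 0]. *)
have a2b2 : a2 * b2 = 0 by from_coord (diassoc_dlA dlr e1 e1 e2) i0.
have b2b3 : b2 * b3 = 0 by from_coord (diassoc_dlA dlr e1 e1 e2) i1.
have a3b3 : a3 * b3 = 0 by from_coord (diassoc_dlA dlr e2 e1 e1) i0.
have a2a3 : a2 * a3 = 0 by from_coord (diassoc_dlA dlr e1 e2 e2) i0.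
move: S dlr; have [rscale | ] := boolP ((b3 != 0) || (a2 != 0)).
  have [-> ->] : b2 = 0 /\ a3 = 0.
    case/orP: rscale => /negPf nz0.
    - by case/mulf_eq0_or: b2b3 => [|/eqP]; case/mulf_eq0_or: a3b3 => [|/eqP]; rewrite ?nz0.
    - by case/mulf_eq0_or: a2b2 => [/eqP|]; case/mulf_eq0_or: a2a3 => [/eqP|]; rewrite ?nz0.
  by rewrite add0r addr0; exact: items_cover_rscale.
rewrite negb_or !negbK => /andP [/eqP b30 /eqP a20]; subst.
rewrite addr0 add0r; apply: items_cover_lscale.
apply: contraT; rewrite negb_or !negbK => /andP [/eqP b20 /eqP a30]; subst.
case: nz => x [y]; rewrite (_ : mprod _ x y = 0) ?eqxx //.
by row2_field.
Qed.

Lemma items_cover_nonzero (A : 'M[F]_(2,4)) : (exists x y, mprod A x y != 0) -> items_cover A.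
Proof.
move=> nz.
have [d1|/items_cover_generated//] := eqVneq (det2 e1 (mprod A e1 e1)) 0.
have [d2|/items_cover_generated//] := eqVneq (det2 e2 (mprod A e2 e2)) 0.
have [d3|/items_cover_generated//] := eqVneq (det2 (e1 + e2) (mprod A (e1 + e2) (e1 + e2))) 0.
have [d4|/items_cover_generated//] := eqVneq (det2 (e1 - e2) (mprod A (e1 - e2) (e1 - e2))) 0.
move: nz d1 d2 d3 d4; rewrite (mx24_eta A) /det2 !mxE /=.
move: (A i0 j0) (A i0 j1) (A i0 j2) (A i0 j3) (A i1 j0) (A i1 j1) (A i1 j2) (A i1 j3).
move=> a1 a2 a3 a4 b1 b2 b3 b4 nz d1 d2 d3 d4.
have ? : b1 = 0 by solve_linear d1.
have ? : a4 = 0 by solve_linear d2.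
subst; have ? : b4 = a2 + a3 by have d34 := congr2 +%R d3 d4; solve_linear d34.
have ? : a1 = b2 + b3 by have d34 := congr2 (fun s t => s - t) d3 d4; solve_linear d34.
by subst; apply: items_cover_sq_parallel.
Qed.

End LeftProducts.

Section ItemInvariants.
Variable F : fieldType.
Hypothesis two_neq0 : (2 : F) != 0.

Definition item_signature (i : item) (p : F) : Prop :=
  let dl := item_dl i p in let dr := item_dr i p in
  let dl_unit := exists e, left_id e dl in
  match i with
  | D13_3_1 => prod3_null dl
  | D3_3_2 => dl =2 dr /\ ~ prod3_null dl /\ commutative dl /\ ~ dl_unit
  | D3_3_3 => ~ dl =2 dr /\ ~ prod3_null dl /\ commutative dl
  | D3_3_4 => dl =2 dr /\ ~ prod3_null dl /\ ~ commutative dl /\ dl_unit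
  | D3_3_5 => ~ dl =2 dr /\ ~ prod3_null dl /\ ~ commutative dl /\ commutative dr
  | D3_3_6 => ~ dl =2 dr /\ ~ prod3_null dl /\ ~ commutative dl /\ ~ commutative dr
  | D3_3_7 => dl =2 dr /\ ~ prod3_null dl /\ ~ commutative dl /\ ~ dl_unit
  | D3_3_8 => dl =2 dr /\ ~ prod3_null dl /\ commutative dl /\ dl_unit
  end.

Lemma item_signatureP i p : item_signature i p.
Proof.
have four_nz := four_neq0 two_neq0.
case: i; rewrite /item_signature.
- by move=> x y z; row2_field.
- split; last split; last split; [done | move=> H; refute_at (H e1 e1 e1) i0
                                 | move=> x y; row2_field | case=> e H; refute_at (H e2) i1].
- split; last split; [move=> H; refute_at (H e1 e2) i1 | move=> H; refute_at (H e1 e1 e1) i0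
                     | move=> x y; row2_field].
- split; last split; last split; [done | move=> H; refute_at (H e1 e1 e1) i0
                                 | move=> H; refute_at (H e1 e2) i1 | exists e1 => x; row2_field].
- split; last split; last split; [move=> H; refute_at (H e2 e1) i1
                                 | move=> H; refute_at (H e1 e1 e1) i0
                                 | move=> H; refute_at (H e1 e2) i1 | move=> x y; row2_field].
- split; last split; last split; [move=> H; refute_at (H e2 e1) i1
                                 | move=> H; refute_at (H e1 e1 e1) i0
                                 | move=> H; refute_at (H e1 e2) i1
                                 | move=> H; refute_at (H e1 e2) i1].
- split; last split; last split; [done | move=> H; refute_at (H e1 e1 e1) i0
                                 | move=> H; refute_at (H e1 e2) i1
                                 | case=> e H; refute_at (H e2) i1].
- split; last split; last split; [done | move=> H; refute_at (H e1 e1 e1) i0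
                                 | move=> x y; row2_field | exists (vec2 2^-1 0) => x; row2_field].
Qed.

End ItemInvariants.

Lemma pchar3_two_neq0 (F : fieldType) : (3 \in [pchar F])%N -> (2 : F) != 0.
Proof.
case/andP => _ /eqP three0; apply: contraNneq (oner_neq0 F) => two0.
have -> : (1 : F) = 3 - 2 by ring.
by rewrite three0 two0 subrr.
Qed.

Lemma dimv2_basis (F : fieldType) (V : vectType F) : \dim (fullv : {vspace V}) = 2%N ->
  exists (u w : V) (c1 c2 : V -> F),
    (forall v, v = c1 v *: u + c2 v *: w) /\ (forall a b, a *: u + b *: w = 0 -> a = 0 /\ b = 0).
Proof.
move=> dimV; move: (vbasis fullv) (vbasisP (fullv : {vspace V})); rewrite dimV => X X_basis.
exists X`_0, X`_1, (coord X ord0), (coord X (lift ord0 ord0)); split.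
- move=> v; have v_span : v \in <<X>>%VS by rewrite (span_basis X_basis) memvf.
  by rewrite {1}(coord_span v_span) !big_ord_recl big_ord0 addr0.
- move=> a b ab0; have := freeP (basis_free X_basis) (fun i : 'I_2 => if i == ord0 then a else b).
  rewrite !big_ord_recl big_ord0 addr0 /= => /(_ ab0) coefs0.
  by split; [apply: (coefs0 ord0) | apply: (coefs0 (lift ord0 ord0))].
Qed.

Theorem mainTheorem6 (F : fieldType) (hF : (3 \in [pchar F])%N) :
  (forall (V : vectType F), \dim (fullv : {vspace V}) = 2%N ->
     forall dl dr : V -> V -> V,
       is_bilinear dl -> is_bilinear dr -> diassociative dl dr ->
       (exists x y : V, dl x y != 0) ->
       exists (i : item) (p : F),
         dialg_iso dl dr (item_dl i p) (item_dr i p))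
  /\
  (forall (i j : item) (p q : F), i <> j ->
     ~ dialg_iso (item_dl i p) (item_dr i p) (item_dl j q) (item_dr j q)).
Proof.
have two_neq0 := pchar3_two_neq0 hF; split.
- move=> V dimV dl dr dl_bil dr_bil dlr nz.
  have [u [w [c1 [c2 [uw_span uw_free]]]]] := dimv2_basis dimV.
  have iso := struct_mx_iso uw_span uw_free dl_bil dr_bil
                (struct_mxP uw_span dl) (struct_mxP uw_span dr).
  have [i [p ip]] := items_cover_nonzero two_neq0 (dialg_iso_nonzero iso nz)
                       (dialg_iso_diassociative iso dlr).
  by exists i, p; apply: dialg_iso_sym (dialg_iso_trans ip iso).
- move=> i j p q ij iso; have [s1 s2 s3 s4 s5] := dialg_iso_invariants iso.
  have := item_signatureP two_neq0 i p; have := item_signatureP two_neq0 j q.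
  clear iso; move: ij s1 s2 s3 s4 s5.
  by case: i; case: j => //= _; rewrite /item_signature /=; tauto.
Qed.
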